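(* Let $R$ be a commutative Bezout domain. The following are equivalent: (1) $R$ has stable range 1.5; (2) for every $n\times m$ matrix $A$ over $R$ with $\operatorname{rank}A>1$ there is a row $u=(1,u_2,\dots,u_n)$ over $R$ such that $uA=(b_1,\dots,b_m)$ where $(b_1,\dots,b_m)$ equals (up to a unit) the greatest common divisor of all entries of $A$.
   Context: A commutative Bezout domain is a commutative integral domain with $1\ne0$ in which every finitely generated ideal is principal. $R$ has stable range 1.5 if for all $a,b\in R$ and $c\in R\setminus\{0\}$ with $(a,b,c)=1$ there is $r\in R$ with $(a+br,c)=1$. The rank of a matrix is the largest order of a nonzero minor. *)

From HB Require Import structures.
From mathcomp Require Import all_boot all_order all_algebra.
Set Implicit Arguments. Unset Strict Implicit. Unset Printing Implicit Defensive.
Import GRing.Theory.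
Local Open Scope ring_scope.

Section Defs.
Variable R : comNzRingType.

Definition dvd (a b : R) : Prop := exists c, b = c * a.

Definition in_ideal (s : seq R) (x : R) : Prop :=
  exists c : 'I_(size s) -> R, x = \sum_(i < size s) c i * s`_i.

Definition bezout_ring : Prop :=
  forall s : seq R, exists d : R,
    forall x, in_ideal s x <-> exists r, x = r * d.

Definition stable_range_1p5 : Prop :=
  forall a b c : R, c != 0 -> in_ideal [:: a; b; c] 1 ->
    exists r : R, in_ideal [:: a + b * r; c] 1.

Definition is_gcd (P : R -> Prop) (d : R) : Prop :=
  (forall x, P x -> dvd d x) /\
  (forall e, (forall x, P x -> dvd e x) -> dvd e d).

Definition entries n m (A : 'M[R]_(n, m)) (x : R) : Prop :=
  exists i j, x = A i j.

Definition has_nonzero_minor n m (A : 'M[R]_(n, m)) (k : nat) : Prop :=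
  exists (f : 'I_k -> 'I_n) (g : 'I_k -> 'I_m),
    injective f /\ injective g /\ \det (\matrix_(i, j) A (f i) (g j)) != 0.

Definition rank_gt1 n m (A : 'M[R]_(n, m)) : Prop :=
  exists k, (1 < k)%N /\ has_nonzero_minor A k.
End Defs.

From Pilot Require Import Defs.
From HB Require Import structures.
From mathcomp Require Import all_boot all_order all_algebra.
From mathcomp Require Import ring.
From Stdlib Require Import Classical.
Import GRing.Theory.
Set Implicit Arguments. Unset Strict Implicit.
Local Open Scope ring_scope.
Local Notation dvd := Defs.dvd.

(* For (1) => (2), write the matrix as a first row x above a block B.  Bezout
   and stable range 1.5 combine the rows of B into one row z whose content is
   gcd(B).  Any two rows y, z that are not collinear admit r with
   content(y + r z) = gcd(y, z): write z = g q with q primitive, split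
   y = (y.w) q + b with b != 0, and apply stable range 1.5 to the triple
   y.w, g, content(b) divided by their gcd.  Rank > 1 lets us first add
   rows of B to x until x is not collinear with z.  For (2) => (1) apply (2)
   to the matrix [[a, c], [b, 0]], whose determinant -bc is nonzero. *)

Section Divisibility.
Variable R : idomainType.
Implicit Types a b c d : R.

Lemma dvd0 a : dvd a 0. Proof. by exists 0; rewrite mul0r. Qed.

Lemma dvdD a b c : dvd a b -> dvd a c -> dvd a (b + c).
Proof. by move=> [x ->] [y ->]; exists (x + y); rewrite mulrDl. Qed.

Lemma dvd_mull a b c : dvd a b -> dvd a (c * b).
Proof. by move=> [x ->]; exists (c * x); rewrite mulrA. Qed.

Lemma dvd_trans a b c : dvd a b -> dvd b c -> dvd a c.
Proof. by move=> [x ->] [y ->]; exists (y * x); rewrite mulrA. Qed.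

Lemma dvd_sum (I : finType) a (F : I -> R) :
  (forall i, dvd a (F i)) -> dvd a (\sum_i F i).
Proof. by move=> aF; apply: big_ind => //; [exact: dvd0 | exact: dvdD]. Qed.

Lemma dvd0_eq0 a : dvd 0 a -> a = 0.
Proof. by move=> [x ->]; rewrite mulr0. Qed.

Lemma in_ideal2P a b x : in_ideal [:: a; b] x <-> exists l m, x = l * a + m * b.
Proof.
split=> [[f ->]|[l [m ->]]].
  by exists (f ord0), (f (lift ord0 ord0)); rewrite !big_ord_recl big_ord0 addr0.
exists (fun i : 'I_2 => [:: l; m]`_i).
by rewrite !big_ord_recl big_ord0 addr0.
Qed.

Lemma in_ideal3P a b c x :
  in_ideal [:: a; b; c] x <-> exists l m k, x = l * a + m * b + k * c.
Proof.
split=> [[f ->]|[l [m [k ->]]]].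
  exists (f ord0), (f (lift ord0 ord0)), (f (lift ord0 (lift ord0 ord0))).
  by rewrite !big_ord_recl big_ord0 addr0 addrA.
exists (fun i : 'I_3 => [:: l; m; k]`_i).
by rewrite !big_ord_recl big_ord0 addr0 addrA.
Qed.

End Divisibility.

Section Content.
Variable R : idomainType.
Implicit Types a b c d e t : R.

Definition dot m (v : 'rV[R]_m) (w : 'cV[R]_m) : R := (v *m w) 0 0.

Definition in_content m (v : 'rV[R]_m) t : Prop := exists w, t = dot v w.

Definition dvd_mx p q d (A : 'M[R]_(p, q)) : Prop := forall i j, dvd d (A i j).

Lemma dotDl m (x y : 'rV[R]_m) w : dot (x + y) w = dot x w + dot y w.
Proof. by rewrite /dot mulmxDl mxE. Qed.

Lemma dotDr m (x : 'rV[R]_m) w w' : dot x (w + w') = dot x w + dot x w'.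
Proof. by rewrite /dot mulmxDr mxE. Qed.

Lemma dotZl m (x : 'rV[R]_m) a w : dot (a *: x) w = a * dot x w.
Proof. by rewrite /dot -scalemxAl mxE. Qed.

Lemma dotZr m (x : 'rV[R]_m) a w : dot x (a *: w) = a * dot x w.
Proof. by rewrite /dot -scalemxAr mxE. Qed.

Lemma dotNl m (x : 'rV[R]_m) w : dot (- x) w = - dot x w.
Proof. by rewrite /dot mulNmx mxE. Qed.

Lemma dotNr m (x : 'rV[R]_m) w : dot x (- w) = - dot x w.
Proof. by rewrite /dot mulmxN mxE. Qed.

Lemma in_content_lin m (v : 'rV[R]_m) t t' a b :
  in_content v t -> in_content v t' -> in_content v (a * t + b * t').
Proof.
by move=> [w ->] [w' ->]; exists (a *: w + b *: w'); rewrite dotDr !dotZr.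
Qed.

Lemma dvd_mx_mull p q r d (A : 'M[R]_(p, q)) (B : 'M[R]_(q, r)) :
  dvd_mx d B -> dvd_mx d (A *m B).
Proof. by move=> dB i j; rewrite mxE; apply: dvd_sum => k; apply: dvd_mull. Qed.

Lemma dvd_mx_mulr p q r d (A : 'M[R]_(p, q)) (B : 'M[R]_(q, r)) :
  dvd_mx d A -> dvd_mx d (A *m B).
Proof.
by move=> dA i j; rewrite mxE; apply: dvd_sum => k; rewrite mulrC; apply: dvd_mull.
Qed.

Lemma dvd_mx_content m d t (v : 'rV[R]_m) : dvd_mx d v -> in_content v t -> dvd d t.
Proof. by move=> dv [w ->]; apply: (dvd_mx_mulr w dv). Qed.

Lemma dvd_mx_trans p q d e (A : 'M[R]_(p, q)) : dvd d e -> dvd_mx e A -> dvd_mx d A.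
Proof. by move=> de eA i j; apply: dvd_trans de (eA i j). Qed.

Lemma dvd_mxD p q d (A B : 'M[R]_(p, q)) : dvd_mx d A -> dvd_mx d B -> dvd_mx d (A + B).
Proof. by move=> dA dB i j; rewrite mxE; apply: dvdD. Qed.

Lemma dvd_mxZl p q d a (A : 'M[R]_(p, q)) : dvd d a -> dvd_mx d (a *: A).
Proof.
by move=> [c ->] i j; rewrite mxE mulrAC; apply: dvd_mull; exists 1; rewrite mul1r.
Qed.

Lemma dvd_mxZr p q d a (A : 'M[R]_(p, q)) : dvd_mx d A -> dvd_mx d (a *: A).
Proof. by move=> dA i j; rewrite mxE; apply: dvd_mull. Qed.

Lemma dvd_mx_col p1 p2 q d (A1 : 'M[R]_(p1, q)) (A2 : 'M[R]_(p2, q)) :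
  dvd_mx d A1 -> dvd_mx d A2 -> dvd_mx d (col_mx A1 A2).
Proof.
move=> d1 d2 i j; case: (splitP i) => k ik.
  by rewrite (_ : i = lshift p2 k) ?col_mxEu //; apply: val_inj.
by rewrite (_ : i = rshift p1 k) ?col_mxEd //; apply: val_inj.
Qed.

Lemma in_content0 m t : in_content (0 : 'rV[R]_m) t -> t = 0.
Proof. by move=> [w ->]; rewrite /dot mul0mx mxE. Qed.

Lemma dvd0_mx_eq0 p q (A : 'M[R]_(p, q)) : dvd_mx 0 A -> A = 0.
Proof. by move=> A0; apply/matrixP => i j; rewrite mxE (dvd0_eq0 (A0 i j)). Qed.

Lemma dvd_mx_entries p q d (A : 'M[R]_(p, q)) :
  dvd_mx d A <-> forall x, entries A x -> dvd d x.
Proof. by split=> [dA _ [i [j ->]] | dA i j]; last (apply: dA; exists i, j). Qed.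

Lemma is_gcd_entries_content p q (A : 'M[R]_(p, q)) (u : 'rV[R]_p) d :
  in_content (u *m A) d -> dvd_mx d A ->
  is_gcd (entries A) d /\ is_gcd (entries (u *m A)) d.
Proof.
move=> uAd dA.
have gcd_uA e : (forall x, entries (u *m A) x -> dvd e x) -> dvd e d.
  by move/dvd_mx_entries => euA; apply: dvd_mx_content euA uAd.
split; split=> //; first exact/dvd_mx_entries.
- by move=> e /dvd_mx_entries eA; apply/gcd_uA/dvd_mx_entries/dvd_mx_mull.
- exact/dvd_mx_entries/dvd_mx_mull.
Qed.

End Content.

Section Collinear.
Variable R : idomainType.

Definition collinear m (x y : 'rV[R]_m) : Prop :=
  exists a b, (a != 0 \/ b != 0) /\ a *: x + b *: y = 0.

Definition rows_collinear p q (A : 'M[R]_(p, q)) : Prop :=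
  forall i j, collinear (row i A) (row j A).

Lemma row_col_mx p1 p2 q (A1 : 'M[R]_(p1, q)) (A2 : 'M[R]_(p2, q)) i :
  (exists k, row i (col_mx A1 A2) = row k A1) \/
  (exists k, row i (col_mx A1 A2) = row k A2).
Proof.
case: (splitP i) => k ik; [left | right]; exists k.
  by rewrite (_ : i = lshift p2 k) ?rowKu //; apply: val_inj.
by rewrite (_ : i = rshift p1 k) ?rowKd //; apply: val_inj.
Qed.

Lemma collinear_refl m (x : 'rV[R]_m) : collinear x x.
Proof.
exists 1, (-1); split; first by left; exact: oner_neq0.
by rewrite scale1r scaleN1r subrr.
Qed.

Lemma collinear0l m (y : 'rV[R]_m) : collinear 0 y.
Proof.
exists 1, 0; split; first by left; exact: oner_neq0.
by rewrite scaler0 scale0r addr0.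
Qed.

Lemma collinear0r m (x : 'rV[R]_m) : collinear x 0.
Proof.
exists 0, 1; split; first by right; exact: oner_neq0.
by rewrite scaler0 scale0r addr0.
Qed.

Lemma collinear_entry m (x y : 'rV[R]_m) a b :
  a *: x + b *: y = 0 -> forall j, a * x 0 j + b * y 0 j = 0.
Proof. by move=> /rowP xy j; have := xy j; rewrite !mxE. Qed.

Lemma scalev_eq0 m a (y : 'rV[R]_m) : a != 0 -> a *: y = 0 -> y = 0.
Proof.
move=> a0 /rowP ay; apply/rowP => j; have /eqP := ay j.
by rewrite !mxE mulf_eq0 (negbTE a0) => /eqP.
Qed.

Lemma collinear_nz m (x z : 'rV[R]_m) : z != 0 -> collinear x z ->
  exists a b, a != 0 /\ a *: x + b *: z = 0.
Proof.
move=> z0 [a [b [ab xz]]]; have [a0|a0] := eqVneq a 0; last by exists a, b.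
case: ab => [|b0]; first by rewrite a0 eqxx.
by move: xz; rewrite a0 scale0r add0r => /(scalev_eq0 b0) /eqP; rewrite (negbTE z0).
Qed.

Lemma collinear_trans m (z x y : 'rV[R]_m) :
  z != 0 -> collinear x z -> collinear y z -> collinear x y.
Proof.
move=> z0 /(collinear_nz z0) [a [b [a0 /collinear_entry xz]]].
move=> /(collinear_nz z0) [c [d [c0 yz]]].
have [d0|d0] := eqVneq d 0.
  by move: yz; rewrite d0 scale0r addr0 => /(scalev_eq0 c0) ->; apply: collinear0r.
move/collinear_entry: yz => yz.
exists (d * a), (- (b * c)); split; first by left; rewrite mulf_neq0.
apply/rowP => j; rewrite !mxE.
have -> : d * a * x 0 j + - (b * c) * y 0 j =
  d * (a * x 0 j + b * z 0 j) - b * (c * y 0 j + d * z 0 j) by ring.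
by rewrite xz yz !mulr0 subrr.
Qed.

Lemma noncollinearD m (x y z : 'rV[R]_m) :
  z != 0 -> collinear x z -> ~ collinear y z -> ~ collinear (x + y) z.
Proof.
move=> z0 /(collinear_nz z0) [a [b [a0 /collinear_entry xz]]] yz.
move=> /(collinear_nz z0) [c [d [c0 /collinear_entry xyz]]]; apply: yz.
exists (a * c), (a * d - c * b); split; first by left; rewrite mulf_neq0.
apply/rowP => j; rewrite !mxE; have := xyz j; rewrite mxE => xyzj.
have -> : a * c * y 0 j + (a * d - c * b) * z 0 j =
  a * (c * (x 0 j + y 0 j) + d * z 0 j) - c * (a * x 0 j + b * z 0 j) by ring.
by rewrite xyzj xz !mulr0 subrr.
Qed.

Lemma det_eq0_of_mulmx n (M : 'M[R]_n) (v : 'rV[R]_n) i :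
  v 0 i != 0 -> v *m M = 0 -> \det M = 0.
Proof.
move=> vi0 vM; have /eqP : (v *m M *m \adj M) 0 i = 0 by rewrite vM mul0mx mxE.
by rewrite -mulmxA mul_mx_adj mul_mx_scalar mxE mulf_eq0 (negbTE vi0) orbF => /eqP.
Qed.

Lemma rank_gt1_noncollinear p q (A : 'M[R]_(p, q)) : rank_gt1 A -> ~ rows_collinear A.
Proof.
move=> [k [k1 [f [g [_ [_]]]]]] + Acol.
case: k k1 f g => [|[|k]] // _ f g; set M := \matrix_(i, j) _ => /eqP; apply.
have [a [b [ab /collinear_entry fAB]]] := Acol (f 0) (f 1).
pose v : 'rV_k.+2 := a *: delta_mx 0 0 + b *: delta_mx 0 1.
have vM : v *m M = 0.
  apply/rowP => j; rewrite /v mulmxDl -!scalemxAl -!rowE !mxE.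
  by have := fAB (g j); rewrite !mxE.
have [i vi0] : exists i, v 0 i != 0.
  by case: ab => ?; [exists 0 | exists 1]; rewrite !mxE /= ?mulr1 ?mulr0 ?addr0 ?add0r.
exact: det_eq0_of_mulmx vi0 vM.
Qed.

End Collinear.

Section Bezout.
Variable R : idomainType.
Hypothesis bezR : bezout_ring R.
Implicit Types a b c d : R.

Lemma bezout2 a b : exists l m, dvd (l * a + m * b) a /\ dvd (l * a + m * b) b.
Proof.
have [d gen] := bezR [:: a; b].
have [l [m dE]] : exists l m, d = l * a + m * b.
  by apply/in_ideal2P/gen; exists 1; rewrite mul1r.
have [a' aE] : exists a', a = a' * d by apply/gen/in_ideal2P; exists 1, 0; ring.
have [b' bE] : exists b', b = b' * d by apply/gen/in_ideal2P; exists 0, 1; ring.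
by exists l, m; rewrite -dE; split; [exists a' | exists b'].
Qed.

Lemma gcd_coprime_cofactors a b c : c != 0 ->
  exists d a' b' c',
    [/\ a = a' * d, b = b' * d, c = c' * d & in_ideal [:: a'; b'; c'] 1].
Proof.
move=> c0; have [d gen] := bezR [:: a; b; c].
have [l [m [k dE]]] : exists l m k, d = l * a + m * b + k * c.
  by apply/in_ideal3P/gen; exists 1; rewrite mul1r.
have [a' aE] : exists a', a = a' * d by apply/gen/in_ideal3P; exists 1, 0, 0; ring.
have [b' bE] : exists b', b = b' * d by apply/gen/in_ideal3P; exists 0, 1, 0; ring.
have [c' cE] : exists c', c = c' * d by apply/gen/in_ideal3P; exists 0, 0, 1; ring.
have d0 : d != 0 by apply: contraNneq c0 => d0; rewrite cE d0 mulr0.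
exists d, a', b', c'; split => //; apply/in_ideal3P; exists l, m, k.
by apply: (mulIf d0); rewrite mul1r {1}dE aE bE cE; ring.
Qed.

Lemma content_exists m (v : 'rV[R]_m) : exists w, dvd_mx (dot v w) v.
Proof.
elim: m v => [|m IH] v; first by exists 0 => ? [].
pose v' : 'rV[R]_m := \row_j v 0 (lift ord0 j).
have [w' v'w'] := IH v'.
have [l [k [dv0 dv'w']]] := bezout2 (v 0 ord0) (dot v' w').
pose w : 'cV[R]_m.+1 :=
  \col_i (if unlift ord0 i is Some j then k * w' j 0 else l).
exists w; have -> : dot v w = l * v 0 ord0 + k * dot v' w'.
  rewrite /dot !mxE big_ord_recl !mxE unlift_none mulrC; congr (_ + _).
  rewrite mulr_sumr; apply: eq_bigr => j _.
  by rewrite /w /v' !mxE liftK mulrCA.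
move=> i j; rewrite (ord1 i).
case: (unliftP ord0 j) => [j'|] -> //.
by apply: dvd_trans dv'w' _; have := v'w' 0 j'; rewrite mxE.
Qed.

Lemma collinear_common_factor m (y y' : 'rV[R]_m) : collinear y y' ->
  exists l mu a b, y = a *: (l *: y + mu *: y') /\ y' = b *: (l *: y + mu *: y').
Proof.
move=> [a [b [ab /collinear_entry yy']]].
have [s [t [[a' aE] [b' bE]]]] := bezout2 a b.
move: aE bE; set h := s * a + t * b => aE bE.
have h0 : h != 0.
  by apply: contraPneq ab => h0; rewrite aE bE h0 !mulr0 eqxx => -[].
have st1 : s * a' + t * b' = 1.
  by apply: (mulIf h0); rewrite mul1r {2}/h aE bE; ring.
have rel j : a' * y 0 j + b' * y' 0 j = 0.
  by apply: (mulIf h0); rewrite mul0r -(yy' j) aE bE; ring.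
exists t, (- s), b', (- a'); split; apply/rowP => j; rewrite !mxE.
  rewrite -[LHS]mul1r -st1 -[X in _ = X]add0r -[0 in RHS](mulr0 s) -(rel j).
  ring.
rewrite -[LHS]mul1r -st1 -[X in _ = X]add0r -[0 in RHS](mulr0 t) -(rel j).
ring.
Qed.

Lemma collinear_pair_content m (y y' : 'rV[R]_m) : collinear y y' ->
  exists l mu d, [/\ in_content (l *: y + mu *: y') d, dvd_mx d y & dvd_mx d y'].
Proof.
move=> /collinear_common_factor [l [mu [a [b]]]].
set p := l *: y + mu *: y' => -[yE y'E].
have [w pw] := content_exists p.
exists l, mu, (dot p w); split; first by exists w.
  by rewrite yE; apply: dvd_mxZr.
by rewrite y'E; apply: dvd_mxZr.
Qed.

Lemma primitive_factor m (z : 'rV[R]_m) : z != 0 ->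
  exists g q w, [/\ g != 0, z = g *: q & dot q w = 1].
Proof.
move=> z0; have [w zw] := content_exists z.
have [qf qE] := fin_all_exists (zw 0).
have g0 : dot z w != 0.
  by apply: contraNneq z0 => g0; apply/eqP/dvd0_mx_eq0; rewrite -g0.
have zE : z = dot z w *: \row_j qf j by apply/rowP => j; rewrite !mxE qE mulrC.
exists (dot z w), (\row_j qf j), w; split => //.
by apply: (mulfI g0); rewrite -dotZl -zE mulr1.
Qed.

Section StableRange.
Hypothesis srR : stable_range_1p5 R.

Lemma content_shift m (x z : 'rV[R]_m) : ~ collinear x z ->
  exists r d, [/\ in_content (x + r *: z) d, dvd_mx d x & dvd_mx d z].
Proof.
move=> xz.
have z0 : z != 0 by apply: contra_notN xz => /eqP ->; apply: collinear0r.
have [g [q [w [g0 zE qw]]]] := primitive_factor z0.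
set a := dot x w; set b := x - a *: q.
have [be bc] := content_exists b; set c := dot b be in bc.
have c0 : c != 0.
  apply/eqP => c0; apply: xz; exists g, (- a); split; first by left.
  have b0 : b = 0 by apply: dvd0_mx_eq0; rewrite -c0.
  have xE : x = a *: q by apply/eqP; rewrite -subr_eq0 -/b b0.
  by rewrite xE zE !scalerA -scalerDl mulrC mulNr subrr scale0r.
have [d [a' [g' [c' [aE gE cE cop]]]]] := gcd_coprime_cofactors a g c0.
have c'0 : c' != 0 by apply: contraNneq c0 => c'0; rewrite cE c'0 mul0r.
have [r /in_ideal2P [l [k lk1]]] := srR c'0 cop.
have dE : d = l * (a + g * r) + k * c by rewrite aE gE cE -[LHS]mul1r lk1; ring.
exists r, d; split.
- rewrite dE; apply: in_content_lin.
    by exists w; rewrite zE dotDl !dotZl qw -/a; ring.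
  exists (be - dot q be *: w).
  by rewrite /c /b zE !(dotDl, dotDr, dotZl, dotZr, dotNl, dotNr) qw -/a; ring.
- have -> : x = b + a *: q by rewrite /b subrK.
  apply: dvd_mxD; last by rewrite aE; apply: dvd_mxZl; exists a'.
  by apply: dvd_mx_trans bc; exists c'.
- by rewrite zE gE; apply: dvd_mxZl; exists g'.
Qed.

Lemma pair_content m (y y' : 'rV[R]_m) :
  exists l mu d, [/\ in_content (l *: y + mu *: y') d, dvd_mx d y & dvd_mx d y'].
Proof.
have [/collinear_pair_content //|yy'] := classic (collinear y y').
have [r [d [yd dy dy']]] := content_shift yy'.
by exists 1, r, d; rewrite scale1r.
Qed.

Lemma mx_content n m (B : 'M[R]_(n, m)) :
  exists s d, in_content (s *m B) d /\ dvd_mx d B.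
Proof.
elim: n B => [|n IH] B.
  by exists 0, 0; split; [exists 0; rewrite /dot !mul0mx mxE | move=> []].
move: B; rewrite -[n.+1]/(1 + n)%N => B; rewrite -[B]vsubmxK.
have [s [d [sd dB]]] := IH (dsubmx B).
have [l [mu [e [ye dy dy']]]] := pair_content (usubmx B) (s *m dsubmx B).
exists (row_mx l%:M (mu *: s)), e; split.
  by rewrite mul_row_col mul_scalar_mx -scalemxAl.
by apply: dvd_mx_col => //; apply: dvd_mx_trans dB; apply: dvd_mx_content dy' sd.
Qed.

Lemma first_row_content n m (x : 'rV[R]_m) (B : 'M[R]_(n, m)) :
  ~ rows_collinear (col_mx x B) ->
  exists v d, [/\ in_content (x + v *m B) d, dvd_mx d x & dvd_mx d B].
Proof.
move=> xB; have [s [e [sBe eB]]] := mx_content B.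
set z := s *m B in sBe.
have z0 : z != 0.
  apply: contra_notN xB => /eqP z0.
  have B0 : B = 0 by apply: dvd0_mx_eq0; move: sBe; rewrite z0 => /in_content0 <-.
  have row_x0 i : row i (col_mx x B) = x \/ row i (col_mx x B) = 0.
    case: (row_col_mx x B i) => -[k ->]; first by left; apply: row_id.
    by right; rewrite B0 row0.
  move=> i j; case: (row_x0 i) => ->; case: (row_x0 j) => ->;
    by [apply: collinear_refl | apply: collinear0r | apply: collinear0l].
have [t xtz] : exists t, ~ collinear (x + t *m B) z.
  have [xz|xz] := classic (collinear x z); last by exists 0; rewrite mul0mx addr0.
  have [k kz] : exists k, ~ collinear (row k B) z.
    apply: NNPP => Bz.
    have rowz i : collinear (row i (col_mx x B)) z.
      case: (row_col_mx x B i) => -[k ->]; first by rewrite row_id.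
      by apply: NNPP => kz; apply: Bz; exists k.
    by apply: xB => i j; apply: (collinear_trans z0).
  exists (delta_mx 0 k); rewrite -rowE; exact: noncollinearD.
have [r [d [xd dx dz]]] := content_shift xtz.
have dB : dvd_mx d B by apply: dvd_mx_trans eB; apply: dvd_mx_content dz sBe.
exists (t + r *: s), d; split => //; first by rewrite mulmxDl -scalemxAl addrA.
have -> : x = (x + t *m B) + (- t) *m B by rewrite mulNmx addrK.
exact: dvd_mxD dx (dvd_mx_mull _ dB).
Qed.

Lemma row_reduction n m (A : 'M[R]_(n, m)) : rank_gt1 A ->
  exists u : 'rV[R]_n, (forall i : 'I_n, nat_of_ord i = 0%N -> u 0 i = 1) /\
    exists d, in_content (u *m A) d /\ dvd_mx d A.
Proof.
move/rank_gt1_noncollinear; case: n A => [|n] A.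
  by move=> nc; exfalso; apply: nc => -[].
move: A; rewrite -[n.+1]/(1 + n)%N => A; rewrite -[A]vsubmxK.
move/first_row_content => [v [d [xd dx dB]]].
exists (row_mx 1 v); split.
  by move=> i i0; rewrite (_ : i = lshift n 0) ?row_mxEl ?mxE //; apply: val_inj.
exists d; split; last exact: dvd_mx_col.
by rewrite mul_row_col mul1mx.
Qed.

End StableRange.

Lemma stable_range_of_row_reduction :
  (forall n m (A : 'M[R]_(n, m)), rank_gt1 A ->
     exists u : 'rV[R]_n, (forall i : 'I_n, nat_of_ord i = 0%N -> u 0 i = 1) /\
       exists d, is_gcd (entries A) d /\ is_gcd (entries (u *m A)) d) ->
  stable_range_1p5 R.
Proof.
move=> red a b c c0 /in_ideal3P [l [m [k abc1]]].
have [b0|b0] := eqVneq b 0.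
  by exists 0; apply/in_ideal2P; exists l, k; rewrite abc1 b0 !mulr0 !addr0.
pose A : 'M[R]_2 := \matrix_(i, j)
  if i == 0 then (if j == 0 then a else c) else (if j == 0 then b else 0).
have rkA : rank_gt1 A.
  exists 2%N; split => //; exists id, id; do 2 split => //.
  rewrite (expand_det_row _ 0) !big_ord_recl big_ord0 /cofactor !det_mx11 !mxE /=.
  by rewrite expr1 !mulr0 add0r addr0 mulN1r mulrN oppr_eq0 mulf_neq0.
have [u [u0 [d [[dA _] [_ gcd_uA]]]]] := red _ _ A rkA.
have one : lift ord0 ord0 = 1 :> 'I_2 by apply: val_inj.
have uA0 : (u *m A) 0 0 = a + b * u 0 1.
  by rewrite mxE !big_ord_recl big_ord0 !mxE /= u0 // one mul1r addr0 mulrC.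
have uA1 : (u *m A) 0 1 = c.
  by rewrite mxE !big_ord_recl big_ord0 !mxE /= u0 // one mul1r mulr0 !addr0.
exists (u 0 1); have [l' [m' [ha hc]]] := bezout2 (a + b * u 0 1) c.
have hd : dvd (l' * (a + b * u 0 1) + m' * c) d.
  apply: gcd_uA; apply/dvd_mx_entries => i; rewrite (ord1 i); case=> -[|[|//]] lt_j.
    by rewrite (_ : Ordinal lt_j = 0) ?uA0 //; apply: val_inj.
  by rewrite (_ : Ordinal lt_j = 1) ?uA1 //; apply: val_inj.
have d1 : dvd d 1.
  have dAij i j : dvd d (A i j) by apply: dA; exists i, j.
  have := dAij 0 0; have := dAij 1 0; have := dAij 0 1; rewrite !mxE /= => dc db da.
  by rewrite abc1; apply: dvdD; [apply: dvdD|]; apply: dvd_mull.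
have [e ->] := dvd_trans hd d1.
by apply/in_ideal2P; exists (e * l'), (e * m'); ring.
Qed.

End Bezout.

Theorem theorem2p21 (R : idomainType) (HB : bezout_ring R) :
  stable_range_1p5 R <->
  (forall (n m : nat) (A : 'M[R]_(n, m)), rank_gt1 A ->
     exists u : 'rV[R]_n,
       (forall i : 'I_n, nat_of_ord i = 0%N -> u 0 i = 1) /\
       exists d : R, is_gcd (entries A) d /\ is_gcd (entries (u *m A)) d).
Proof.
split; last exact: stable_range_of_row_reduction.
move=> srR n m A /(row_reduction HB srR) [u [u0 [d [uAd dA]]]].
by exists u; split => //; exists d; apply: is_gcd_entries_content.
Qed.
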